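(* There is an absolute constant $c'>0$ such that the following holds. Let $m\ge1$, $n>2m$ be integers and $\sigma_1^2,\dots,\sigma_n^2>0$. Let $L\subset G^{r}$, $|L|=2m$, consist of $2m$ arms of $G^{r}$ with the largest variances. Define $\eta_F=\binom{2m}{m-1}^{-1}$ for every $F\subset L$ with $|F|=m-1$ and $\eta_F=0$ for every other $F\subset[n]$ with $|F|=m-1$. Then \[ \sum_{M\subset[n]:|M|=m}\Big(\sum_{l\in M}\eta_{M\setminus\{l\}}\sigma_l^2\Big)\,\mathrm{Ent}\big(\{\eta_{M\setminus\{l\}}\sigma_l^2\}_{l\in M}\big)\ \ge\ c'\sum_{i\in G^{l}}\sigma_i^2\,\mathrm{Ent}(\sigma^2_{G^{r}})-\ln(2)\sum_{i\in L}\sigma_i^2 . \]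
   Context: For a nonnegative vector $a$, $\mathrm{Ent}(a)=-\sum_i\hat a_i\ln\hat a_i$ with $\hat a_i=a_i/\sum_ja_j$ and $0\ln0=0$ (a term whose vector is identically zero contributes $0$); $\sigma^2_S=(\sigma_i^2)_{i\in S}$. Let $\underline\sigma^2=\min_i\sigma_i^2$, $G_j=\{i\in[n]:2^{j-1}\le\sigma_i^2/\underline\sigma^2<2^j\}$ for $j=1,\dots,k$ covering $[n]$. $G^{l}=\bigcup_{j:|G_j|\le2m}G_j$. $G'_j=G_j$ if $|G_j|\le2m$, otherwise $G'_j\subset G_j$ with $|G'_j|=2m$; $G^{r}=\bigcup_jG'_j$, the choices made to maximize $\mathrm{Ent}(\sigma^2_{G^{r}})$. (Under $n>2m$ one has $|G^{r}|\ge2m$, so $L$ exists.) *)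

(* over Stdlib's concrete reals R (a realType via Rstruct),
   so that the absolute constant c' can be quantified before everything else. *)
From HB Require Import structures.
From mathcomp Require Import all_boot all_order all_algebra.
From mathcomp Require Import boolp reals Rstruct exp.

Set Implicit Arguments.
Unset Strict Implicit.
Unset Printing Implicit Defensive.
Import Order.TTheory GRing.Theory Num.Theory.
Local Open Scope ring_scope.

Notation R := Rdefinitions.R.

Definition xlnx (x : R) : R := if x == 0 then 0 else x * ln x.

Definition Ent {n : nat} (S : {set 'I_n}) (a : 'I_n -> R) : R :=
  let s := \sum_(i in S) a i in
  if s == 0 then 0 else - \sum_(i in S) xlnx (a i / s).

(* underline sigma^2 = min_i sigma_i^2 (the list is nonempty when n > 0) *)
Definition smin {n : nat} (s : 'I_n -> R) : R :=
  let l := [seq s i | i <- enum 'I_n] in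
  \big[Num.min/head 0 l]_(x <- l) x.

Definition Grp {n : nat} (s : 'I_n -> R) (j : nat) : {set 'I_n} :=
  [set i | (2 ^+ j.-1 <= s i / smin s) && (s i / smin s < 2 ^+ j)].

Definition Gleft {n : nat} (m : nat) (s : 'I_n -> R) : {set 'I_n} :=
  [set i | `[< exists j : nat, [/\ (0 < j)%N, i \in Grp s j & (#|Grp s j| <= 2 * m)%N] >]].

(* Gr is an admissible choice of G^r = union of G'_j, where G'_j = G_j if
   |G_j| <= 2m and otherwise G'_j is a subset of G_j of size 2m. *)
Definition admissibleGr {n : nat} (m : nat) (s : 'I_n -> R) (Gr : {set 'I_n}) : Prop :=
  (forall i, i \in Gr -> exists j : nat, (0 < j)%N /\ i \in Grp s j) /\
  (forall j : nat, (0 < j)%N ->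
     ((#|Grp s j| <= 2 * m)%N -> Gr :&: Grp s j = Grp s j) /\
     ((2 * m < #|Grp s j|)%N -> #|Gr :&: Grp s j| = (2 * m)%N)).

Definition eta {n : nat} (m : nat) (L F : {set 'I_n}) : R :=
  if (F \subset L) && (#|F| == m.-1) then ('C(2 * m, m.-1))%:R^-1 else 0.

Definition lhs7 {n : nat} (m : nat) (s : 'I_n -> R) (L : {set 'I_n}) : R :=
  \sum_(M : {set 'I_n} | #|M| == m)
     (\sum_(l in M) eta m L (M :\ l) * s l) * Ent M (fun l => eta m L (M :\ l) * s l).

(* Write H(A) for the unnormalised entropy (Σ_A σ²) Ent(σ²_A).  Every term of the
   left-hand side indexed by an m-subset M of L equals H(M) / C(2m, m-1), and the
   other terms are nonnegative.  Pairing M with L \ M and using the binary entropy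
   bound H(L) <= H(M) + H(L \ M) + ln 2 Σ_L σ² gives
   LHS >= (H(L) - ln 2 Σ_L σ²) / 2, because C(2m, m-1) <= C(2m, m).
   On the other side, every arm of G^r \ L is below μ = min_L σ², and G^r meets
   each dyadic group G_j in at most 2m arms, so G^r \ L carries mass O(m μ) and
   Σ σ² ln (μ / σ²) = O(m μ) over it (geometric sums over the groups below μ).
   Since H(L) >= 2m μ ln (2m), adding this light tail to L costs only
   H(G^r) <= 25 (H(L) + Σ_L σ²), and Σ_{G^l} σ² Ent(σ²_{G^r}) <= H(G^r) as
   G^l ⊆ G^r. *)

From Pilot Require Import Defs.
From HB Require Import structures.
From mathcomp Require Import all_boot all_order all_algebra.
From mathcomp Require Import boolp reals Rstruct exp.
From mathcomp.algebra_tactics Require Import ring lra.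
From mathcomp Require Import zify.

Set Implicit Arguments.
Unset Strict Implicit.
Unset Printing Implicit Defensive.

Import Order.TTheory GRing.Theory Num.Theory.
Local Open Scope ring_scope.

Lemma ln_sub_le (a b : R) : 0 < a -> 0 < b -> ln a - ln b <= a / b - 1.
Proof.
move=> a_gt0 b_gt0; rewrite -ln_div ?posrE //.
have := @le_ln1Dx _ (a / b - 1); rewrite [1 + _]addrC subrK; apply.
by have := divr_gt0 a_gt0 b_gt0; lra.
Qed.

Lemma ln_le_subr1 (x : R) : 0 < x -> ln x <= x - 1.
Proof. by move=> x_gt0; have := ln_sub_le x_gt0 ltr01; rewrite ln1 divr1 subr0. Qed.

Lemma mulr_ln_sub_le (a b : R) : 0 < a -> 0 < b -> a * (ln b - ln a) <= b - a.
Proof.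
move=> a_gt0 b_gt0; have -> : b - a = a * (b / a - 1) by field; rewrite gt_eqF.
exact: ler_wpM2l (ltW a_gt0) _ _ (ln_sub_le b_gt0 a_gt0).
Qed.

Lemma binary_wEnt_le (x y : R) : 0 <= x -> 0 <= y ->
  x * (ln (x + y) - ln x) + y * (ln (x + y) - ln y) <= (x + y) * ln 2.
Proof.
have ln2_ge0 : 0 <= ln (2 : R) by apply: ln_ge0; lra.
rewrite le0r => /predU1P[-> y_ge0|x_gt0].
  by rewrite !add0r subrr mul0r mulr0 add0r mulr_ge0.
rewrite le0r => /predU1P[->|y_gt0].
  by rewrite !addr0 subrr mul0r mulr0 addr0 (mulr_ge0 (ltW x_gt0)).
have xy_gt0 : 0 < x + y by rewrite addr_gt0.
have := mulr_ln_sub_le (mulr_gt0 (ltr0Sn _ 1) x_gt0) xy_gt0.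
have := mulr_ln_sub_le (mulr_gt0 (ltr0Sn _ 1) y_gt0) xy_gt0.
rewrite !lnM ?posrE //; lra.
Qed.

Lemma ler_sum_subset (T : finType) (F : T -> R) (A B : {set T}) :
  B \subset A -> (forall i, i \in A -> 0 <= F i) ->
  \sum_(i in B) F i <= \sum_(i in A) F i.
Proof.
move=> BA F_ge0; rewrite [leRHS](big_setID B) (setIidPr BA) lerDl.
by apply: sumr_ge0 => i /setDP[iA _]; exact: F_ge0.
Qed.

(* The unnormalised entropy [(\sum_(i in A) s i) * Ent A s], see [mulr_sum_Ent]. *)
Definition wEnt (T : finType) (s : T -> R) (A : {set T}) : R :=
  \sum_(i in A) s i * (ln (\sum_(j in A) s j) - ln (s i)).

Section WeightedEntropy.

Variables (T : finType) (s : T -> R).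
Hypothesis s_gt0 : forall i, 0 < s i.

Lemma wEntE (A : {set T}) :
  wEnt s A = (\sum_(i in A) s i) * ln (\sum_(i in A) s i) - \sum_(i in A) s i * ln (s i).
Proof. by rewrite /wEnt mulr_suml -sumrB; apply: eq_bigr => i _; ring. Qed.

Lemma ler_sum_mem (A : {set T}) i : i \in A -> s i <= \sum_(j in A) s j.
Proof.
move=> iA; rewrite (bigD1 i) //= lerDl.
by apply: sumr_ge0 => j _; exact: ltW.
Qed.

Lemma wEnt_ge0 (A : {set T}) : 0 <= wEnt s A.
Proof.
apply: sumr_ge0 => i iA; have s_le := ler_sum_mem iA.
apply: mulr_ge0; first exact: ltW.
by rewrite subr_ge0 ler_ln ?posrE // (lt_le_trans _ s_le).
Qed.

Lemma wEnt_setD_le (A M : {set T}) : M \subset A ->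
  wEnt s A <= wEnt s M + wEnt s (A :\: M) + ln 2 * \sum_(i in A) s i.
Proof.
move=> MA.
have sumA (F : T -> R) : \sum_(i in A) F i = \sum_(i in M) F i + \sum_(i in A :\: M) F i.
  by rewrite (big_setID M) (setIidPr MA).
rewrite !wEntE !sumA.
have sum_ge0 (B : {set T}) : 0 <= \sum_(i in B) s i by apply: sumr_ge0 => i _; exact: ltW.
have := binary_wEnt_le (sum_ge0 M) (sum_ge0 (A :\: M)).
set x := \sum_(i in M) s i; set y := \sum_(i in A :\: M) s i.
set a := \sum_(i in M) _; set b := \sum_(i in A :\: M) _.
lra.
Qed.

Lemma sum_ln_le (A : {set T}) : (0 < #|A|)%N ->
  \sum_(i in A) ln (s i) <= #|A|%:R * (ln (\sum_(i in A) s i) - ln #|A|%:R).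
Proof.
move=> A_gt0; set N : R := #|A|%:R; set S := \sum_(i in A) s i.
have N_gt0 : 0 < N by rewrite ltr0n.
have [i0 i0A] := card_gt0P A_gt0.
have S_gt0 : 0 < S by apply: lt_le_trans (ler_sum_mem i0A).
have key : \sum_(i in A) (ln N + ln (s i) - ln S) <= \sum_(i in A) (N * s i / S - 1).
  by apply: ler_sum => i _; rewrite -lnM ?posrE //; apply: ln_sub_le; rewrite ?mulr_gt0.
have sum_ratio : \sum_(i in A) (N * s i / S - 1) = 0.
  by rewrite sumrB sumr_const -mulr_suml -mulr_sumr mulfK ?gt_eqF // subrr.
rewrite sum_ratio sumrB big_split /= !sumr_const in key.
rewrite -[ln N *+ _]mulr_natr -[ln S *+ _]mulr_natr -/N in key.
lra.
Qed.

Lemma wEnt_ge_card_ln (A : {set T}) (mu : R) : (0 < #|A|)%N -> 0 < mu ->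
  (forall i, i \in A -> mu <= s i) -> #|A|%:R * mu * ln #|A|%:R <= wEnt s A.
Proof.
move=> A_gt0 mu_gt0 mu_le; set N : R := #|A|%:R; set S := \sum_(i in A) s i.
have : \sum_(i in A) mu * (ln S - ln (s i)) <= wEnt s A.
  apply: ler_sum => i iA; rewrite ler_wpM2r ?mu_le // subr_ge0.
  by rewrite ler_ln ?posrE ?ler_sum_mem // (lt_le_trans _ (ler_sum_mem iA)).
rewrite -mulr_sumr sumrB sumr_const -[ln S *+ _]mulr_natr -/N.
have := ler_wpM2l (ltW mu_gt0) (sum_ln_le A_gt0); rewrite -/N -/S.
lra.
Qed.

Lemma wEnt_setD_decomp (L G : {set T}) (mu : R) : L \subset G ->
  wEnt s G = wEnt s L
    + (\sum_(i in L) s i) * (ln (\sum_(i in G) s i) - ln (\sum_(i in L) s i))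
    + (\sum_(i in G :\: L) s i) * (ln (\sum_(i in G) s i) - ln mu)
    + \sum_(i in G :\: L) s i * (ln mu - ln (s i)).
Proof.
move=> LG; have sumG (F : T -> R) :
    \sum_(i in G) F i = \sum_(i in L) F i + \sum_(i in G :\: L) F i.
  by rewrite (big_setID L) (setIidPr LG).
have gapE : \sum_(i in G :\: L) s i * (ln mu - ln (s i)) =
    (\sum_(i in G :\: L) s i) * ln mu - \sum_(i in G :\: L) s i * ln (s i).
  by rewrite mulr_suml -sumrB; apply: eq_bigr => i _; ring.
rewrite gapE !wEntE (sumG (fun i => s i * ln (s i))); set SG := \sum_(i in G) s i.
have -> : SG * ln SG = (\sum_(i in L) s i) * ln SG + (\sum_(i in G :\: L) s i) * ln SG.
  by rewrite -mulrDl /SG sumG.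
ring.
Qed.

Lemma wEnt_extend_le (L G : {set T}) (mu : R) :
  L \subset G -> (0 < #|L|)%N -> 0 < mu -> (forall i, i \in L -> mu <= s i) ->
  \sum_(i in G :\: L) s i <= 4 * (#|L|%:R * mu) ->
  \sum_(i in G :\: L) s i * (ln mu - ln (s i)) <= 8 * (#|L|%:R * mu) ->
  wEnt s G <= 25 * (wEnt s L + \sum_(i in L) s i).
Proof.
move=> LG L_gt0 mu_gt0 mu_le tail_mass tail_gap; rewrite (wEnt_setD_decomp mu LG).
move: tail_mass tail_gap; set N : R := #|L|%:R; set SL := \sum_(i in L) s i.
set SR := \sum_(i in G :\: L) s i; set SG := \sum_(i in G) s i.
move=> tail_mass tail_gap.
have SG_E : SG = SL + SR by rewrite /SG (big_setID L) (setIidPr LG).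
have SR_ge0 : 0 <= SR by apply: sumr_ge0 => i _; exact: ltW.
have N_gt0 : 0 < N by rewrite ltr0n.
have NmuSL : N * mu <= SL.
  by rewrite /N mulr_natl -sumr_const; apply: ler_sum => i; exact: mu_le.
have SL_gt0 : 0 < SL by apply: lt_le_trans NmuSL; rewrite mulr_gt0.
have SG_gt0 : 0 < SG by rewrite SG_E; lra.
have A_gt0 : 0 < 4 * (N * mu) by rewrite !mulr_gt0.
have mu_le_SG : mu <= SG.
  by have := ler_peMl (ltW mu_gt0) (_ : 1 <= N); rewrite ler1n => /(_ L_gt0); lra.
have head_le := mulr_ln_sub_le SL_gt0 SG_gt0.
have mid_le : SR * (ln SG - ln mu) <= 4 * (N * mu) * (ln SG - ln mu).
  by apply: ler_wpM2r; rewrite // subr_ge0 ler_ln ?posrE.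
(* With [A := 4 N mu >= SR]: [SR ln (SG / mu) <= A ln (SG / A) + A ln 4 + A ln N],
   where [A ln (SG / A) <= SG - A] and [N mu ln N <= wEnt s L]. *)
have A_le := mulr_ln_sub_le A_gt0 SG_gt0.
rewrite !lnM ?posrE ?mulr_gt0 // in A_le.
have ln4_le : N * mu * ln 4 <= N * mu * 3.
  apply: ler_wpM2l; first by rewrite mulr_ge0 ?ltW.
  by have := @ln_le_subr1 4; lra.
have := wEnt_ge_card_ln L_gt0 mu_gt0 mu_le; rewrite -/N.
have := wEnt_ge0 L.
lra.
Qed.

End WeightedEntropy.

Section EntropyOfSubsets.

Variable n : nat.
Implicit Types (A : {set 'I_n}) (a : 'I_n -> R).

Lemma eq_Ent A a b : {in A, a =1 b} -> Ent A a = Ent A b.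
Proof.
move=> ab; rewrite /Ent (eq_bigr _ ab).
by congr (if _ then _ else - _); apply: eq_bigr => i iA; rewrite ab.
Qed.

Lemma Ent_scale A a c : 0 < c -> Ent A (fun i => c * a i) = Ent A a.
Proof.
move=> c_gt0; rewrite /Ent -mulr_sumr mulf_eq0 (gt_eqF c_gt0) /=.
case: eqP => // _; congr (- _); apply: eq_bigr => i _.
by rewrite invfM mulrACA divff ?mul1r // gt_eqF.
Qed.

Lemma Ent_ge0 A a : (forall i, i \in A -> 0 <= a i) -> 0 <= Ent A a.
Proof.
move=> a_ge0; rewrite /Ent; case: eqP => // /eqP S_neq0.
have S_gt0 : 0 < \sum_(i in A) a i by rewrite lt_def S_neq0 sumr_ge0.
rewrite oppr_ge0; apply: sumr_le0 => i iA; rewrite /xlnx; case: eqP => // _.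
have p_ge0 : 0 <= a i / \sum_(i in A) a i by rewrite divr_ge0 ?a_ge0 ?ltW.
apply: mulr_ge0_le0 => //; apply: ln_le0.
rewrite ler_pdivrMr // mul1r (bigD1 i) //= lerDl.
by apply: sumr_ge0 => j /andP[jA _]; exact: a_ge0.
Qed.

Lemma mulr_sum_Ent A a : (forall i, i \in A -> 0 < a i) ->
  (\sum_(i in A) a i) * Ent A a = wEnt a A.
Proof.
move=> a_gt0; rewrite /Ent /wEnt; case: eqP => [S_eq0|/eqP S_neq0].
  have a_eq0 := psumr_eq0P (fun i iA => ltW (a_gt0 i iA)) S_eq0.
  by rewrite mulr0 big1 // => i iA; have := a_gt0 i iA; rewrite a_eq0 ?ltxx.
have S_gt0 : 0 < \sum_(i in A) a i.
  by rewrite lt_def S_neq0 sumr_ge0 // => i iA; rewrite ltW ?a_gt0.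
rewrite mulrN mulr_sumr -sumrN; apply: eq_bigr => i iA; have ai_gt0 := a_gt0 i iA.
rewrite /xlnx mulf_eq0 invr_eq0 !gt_eqF //= ln_div ?posrE //.
by rewrite mulrA mulrCA divff ?mulr1 ?gt_eqF //; lra.
Qed.

End EntropyOfSubsets.

Lemma leq_bin_succ n k : (k.*2 < n)%N -> ('C(n, k) <= 'C(n, k.+1))%N.
Proof.
move=> lt_kn; rewrite -(@leq_pmul2l k.+1) // mul_bin_left leq_mul2r.
by apply/orP; right; lia.
Qed.

Lemma sum_subsets_setD (T : finType) (V : nmodType) (A : {set T}) k (F : {set T} -> V) :
  (k <= #|A|)%N ->
  \sum_(B : {set T} | (#|B| == k) && (B \subset A)) F (A :\: B) =
  \sum_(B : {set T} | (#|B| == #|A| - k)%N && (B \subset A)) F B.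
Proof.
move=> k_le.
pose c (B : {set T}) := (A :\: B) :|: (B :\: A).
have cK : involutive c.
  by move=> B; apply/setP => x; rewrite !inE; case: (x \in A); case: (x \in B).
have cE (B : {set T}) : B \subset A -> c B = A :\: B.
  by move=> BA; rewrite /c (_ : B :\: A = set0) ?setU0 //; apply/eqP; rewrite setD_eq0.
have cA (B : {set T}) : (c B \subset A) = (B \subset A).
  apply/subsetP/subsetP => sub x; have := sub x; rewrite !inE;
    by case: (x \in A); case: (x \in B) => //= /(_ isT).
rewrite [RHS](reindex_inj (inv_inj cK)) /=; apply: eq_big => [B|B /andP[_ BA]]; last by rewrite cE.
rewrite cA; have [BA|_] := boolP (B \subset A); last by rewrite !andbF.
rewrite cE // cardsD (setIidPr BA) !andbT; have le_BA := subset_leq_card BA.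
by apply/idP/idP => /eqP eq_card; apply/eqP; lia.
Qed.

Lemma eta_ge0 n m (L F : {set 'I_n}) : 0 <= Defs.eta m L F.
Proof. by rewrite /Defs.eta; case: ifP => _; rewrite ?invr_ge0 ?ler0n. Qed.

Section HalfSubsetsOfL.

Variables (n m : nat) (s : 'I_n -> R) (L : {set 'I_n}).
Hypotheses (m_gt0 : (0 < m)%N) (s_gt0 : forall i, 0 < s i) (card_L : #|L| = (2 * m)%N).

Lemma lhs7_ge_sum_halves :
  ('C(2 * m, m.-1))%:R^-1 * \sum_(M : {set 'I_n} | (#|M| == m) && (M \subset L)) wEnt s M
  <= lhs7 m s L.
Proof.
set c : R := ('C(2 * m, m.-1))%:R^-1.
rewrite /lhs7 mulr_sumr [leRHS](bigID (fun M : {set 'I_n} => M \subset L)) /=.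
rewrite -[leLHS]addr0; apply: lerD.
  apply: ler_sum => M /andP[/eqP card_M ML].
  have etaE l : l \in M -> Defs.eta m L (M :\ l) = c.
    move=> lM; rewrite /Defs.eta (subset_trans (subD1set M l) ML) /=.
    have card_Ml : #|M :\ l| = m.-1 by have := cardsD1 l M; rewrite lM card_M; lia.
    by rewrite card_Ml eqxx.
  rewrite (eq_bigr (fun l => c * s l)) => [|l lM]; last by rewrite etaE.
  rewrite (@eq_Ent _ M _ (fun l => c * s l)) => [|l lM]; last by rewrite etaE.
  rewrite Ent_scale ?invr_gt0 ?ltr0n ?bin_gt0; last lia.
  by rewrite -mulr_sumr -mulrA mulr_sum_Ent.
apply: sumr_ge0 => M _; apply: mulr_ge0.
  by apply: sumr_ge0 => l _; rewrite mulr_ge0 ?eta_ge0 ?ltW.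
by apply: Ent_ge0 => l _; rewrite mulr_ge0 ?eta_ge0 ?ltW.
Qed.

Lemma sum_halves_wEnt_ge :
  ('C(2 * m, m))%:R * (wEnt s L - ln 2 * \sum_(i in L) s i)
  <= 2 * \sum_(M : {set 'I_n} | (#|M| == m) && (M \subset L)) wEnt s M.
Proof.
have m_le : (m <= #|L|)%N by rewrite card_L; lia.
have compl := sum_subsets_setD (wEnt s) m_le.
rewrite card_L (_ : (2 * m - m = m)%N) in compl; last lia.
have card_halves :
    #|[pred M : {set 'I_n} | (#|M| == m) && (M \subset L)]| = 'C(2 * m, m).
  by rewrite -card_L -cards_draws; apply: eq_card => M; rewrite inE andbC.
have -> : 2 * \sum_(M : {set 'I_n} | (#|M| == m) && (M \subset L)) wEnt s M =
    \sum_(M : {set 'I_n} | (#|M| == m) && (M \subset L)) (wEnt s M + wEnt s (L :\: M)).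
  by rewrite big_split /= compl; ring.
rewrite mulr_natl -card_halves -sumr_const; apply: ler_sum => M /andP[_ ML].
by have := wEnt_setD_le s_gt0 ML; lra.
Qed.

Lemma lhs7_ge : (wEnt s L - ln 2 * \sum_(i in L) s i) / 2 <= lhs7 m s L.
Proof.
have := lhs7_ge_sum_halves; have := sum_halves_wEnt_ge.
set X := wEnt s L - _; set Y := \sum_(M | _) _.
set c : R := ('C(2 * m, m.-1))%:R^-1; set C : R := ('C(2 * m, m))%:R.
move=> halves lhs_ge.
have bin_gt0 : (0 < 'C(2 * m, m.-1))%N by rewrite bin_gt0; lia.
have c_gt0 : 0 < c by rewrite invr_gt0 ltr0n.
have cC_ge1 : 1 <= c * C.
  rewrite mulrC ler_pdivlMr ?ltr0n // mul1r ler_nat.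
  by have := @leq_bin_succ (2 * m) m.-1; rewrite prednK //; apply; lia.
have cY_ge0 : 0 <= c * Y.
  by apply: mulr_ge0; [exact: ltW | apply: sumr_ge0 => M _; exact: wEnt_ge0].
have [X_ge0|] := leP 0 X; last by lra.
have := ler_peMl X_ge0 cC_ge1; have := ler_wpM2l (ltW c_gt0) halves.
lra.
Qed.

End HalfSubsetsOfL.

Lemma smin_gt0 n (s : 'I_n -> R) (i0 : 'I_n) : (forall i, 0 < s i) -> 0 < smin s.
Proof.
move=> s_gt0; rewrite /smin; set l := [seq s i | i <- enum 'I_n].
have l_gt0 x : x \in l -> 0 < x by case/mapP => i _ ->.
have : s i0 \in l by rewrite map_f ?mem_enum.
case: l l_gt0 => [|x l'] // l_gt0 _ /=; rewrite big_seq.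
apply: (big_ind (fun y => 0 < y)); first by rewrite l_gt0 ?mem_head.
  by move=> a b a_gt0 b_gt0; rewrite lt_min a_gt0.
by move=> y; exact: l_gt0.
Qed.

Lemma in_Grp n (s : 'I_n -> R) j i : 0 < smin s ->
  (i \in Grp s j) = (2 ^+ j.-1 * smin s <= s i) && (s i < 2 ^+ j * smin s).
Proof. by move=> smin_pos; rewrite inE ler_pdivlMr // ltr_pdivrMr. Qed.

Lemma sum_exp2S_le K : (\sum_(j < K) 2 ^ j.+1 <= 2 ^ K.+1)%N.
Proof.
elim: K => [|K IH]; first by rewrite big_ord0.
by rewrite big_ord_recr /=; move: IH; set X := \sum_(j < K) _; rewrite !expnS; lia.
Qed.

Lemma sum_exp2S_mul_le K : (\sum_(j < K) 2 ^ j.+1 * (K - j) <= 2 ^ K.+2)%N.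
Proof.
elim: K => [|K IH]; first by rewrite big_ord0.
rewrite big_ord_recr /= subSn // subnn muln1.
rewrite (eq_bigr (fun j : 'I_K => 2 ^ j.+1 * (K - j) + 2 ^ j.+1)%N); last first.
  by move=> j _; rewrite subSn ?mulnS 1?addnC // ltnW.
rewrite big_split /=; move: IH (sum_exp2S_le K).
by set X := \sum_(j < K) _; set Y := \sum_(j < K) _; rewrite !expnS; lia.
Qed.

Section AdmissibleGr.

Variables (n m : nat) (s : 'I_n -> R) (Gr : {set 'I_n}).
Hypotheses (s_gt0 : forall i, 0 < s i) (smin_pos : 0 < smin s) (admGr : admissibleGr m s Gr).

Lemma card_Gr_Grp_le j : (0 < j)%N -> (#|Gr :&: Grp s j| <= 2 * m)%N.
Proof.
move=> j_gt0; have [small big] := admGr.2 j j_gt0.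
by case: (leqP #|Grp s j| (2 * m)) => [le_j|lt_j]; [rewrite small | rewrite big].
Qed.

Lemma Gleft_subset : Gleft m s \subset Gr.
Proof.
apply/subsetP => i; rewrite inE => /asboolP[j [j_gt0 ij /(admGr.2 j j_gt0).1]].
by move/setP/(_ i); rewrite inE ij andbT => ->.
Qed.

Lemma sum_le_by_groups (Rs : {set 'I_n}) K (f : 'I_n -> R) (g : nat -> R) :
  Rs \subset Gr -> (forall r, r \in Rs -> s r < 2 ^+ K * smin s) ->
  (forall r, r \in Rs -> 0 <= f r) -> (forall j, 0 <= g j) ->
  (forall j r, (j < K)%N -> r \in Rs -> r \in Grp s j.+1 -> f r <= g j) ->
  \sum_(r in Rs) f r <= (2 * m)%:R * \sum_(j < K) g j.
Proof.
move=> RsGr s_lt f_ge0 g_ge0 f_le.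
have group_of r : r \in Rs -> exists j : 'I_K, r \in Grp s j.+1.
  move=> rRs; have [[|j] [// _ rj]] := admGr.1 r (subsetP RsGr r rRs).
  move: (rj); rewrite in_Grp //= => /andP[lo _].
  have jK : (j < K)%N.
    rewrite -(ltn_exp2l _ _ (ltnSn 1)) -(ltr_nat R) !natrX -(ltr_pM2r smin_pos).
    exact: le_lt_trans lo (s_lt r rRs).
  by exists (Ordinal jK).
apply: (@le_trans _ _ (\sum_(r in Rs) \sum_(j < K | r \in Grp s j.+1) f r)).
  apply: ler_sum => r rRs; have [j rj] := group_of r rRs.
  by rewrite (bigD1 j) //= lerDl sumr_ge0 // => ? _; exact: f_ge0.
rewrite (exchange_big_dep predT) //= mulr_sumr; apply: ler_sum => j _.
apply: (@le_trans _ _ (\sum_(r in Rs | r \in Grp s j.+1) g j)).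
  by apply: ler_sum => r /andP[rRs rj]; exact: f_le.
rewrite sumr_const -[g j *+ _]mulr_natl; apply: ler_wpM2r => //; rewrite ler_nat.
apply: leq_trans (card_Gr_Grp_le (ltn0Sn j)); apply: subset_leq_card.
by apply/subsetP => r /andP[rRs rj]; rewrite in_setI rj andbT (subsetP RsGr).
Qed.

Lemma tail_mass_le (Rs : {set 'I_n}) K : Rs \subset Gr ->
  (forall r, r \in Rs -> s r < 2 ^+ K * smin s) ->
  \sum_(r in Rs) s r <= (2 * m)%:R * (2 ^+ K.+1 * smin s).
Proof.
move=> RsGr s_lt.
apply: le_trans (sum_le_by_groups (g := fun j => 2 ^+ j.+1 * smin s) RsGr s_lt _ _ _) _.
- by move=> r _; exact: ltW.
- by move=> j; rewrite mulr_ge0 ?exprn_ge0 ?ltW.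
- by move=> j r _ _; rewrite in_Grp // => /andP[_ /ltW].
apply: ler_wpM2l => //; rewrite -mulr_suml; apply: ler_wpM2r; first exact: ltW.
under eq_bigr => j _ do rewrite -natrX.
by rewrite -natr_sum -natrX ler_nat sum_exp2S_le.
Qed.

Lemma tail_ln_gap_le (Rs : {set 'I_n}) K (mu : R) : Rs \subset Gr ->
  mu < 2 ^+ K * smin s -> (forall r, r \in Rs -> s r <= mu) ->
  \sum_(r in Rs) s r * (ln mu - ln (s r)) <= (2 * m)%:R * (2 ^+ K.+2 * smin s * ln 2).
Proof.
move=> RsGr mu_lt le_mu.
have ln2_ge0 : 0 <= ln (2 : R) by apply: ln_ge0; lra.
have gap_ge0 r : r \in Rs -> 0 <= ln mu - ln (s r).
  by move=> rRs; rewrite subr_ge0 ler_ln ?posrE ?le_mu // (lt_le_trans _ (le_mu r rRs)).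
pose g j := 2 ^+ j.+1 * (K - j)%:R * (smin s * ln 2).
apply: le_trans (sum_le_by_groups (g := g) RsGr _ _ _ _) _.
- by move=> r rRs; exact: le_lt_trans (le_mu r rRs) mu_lt.
- by move=> r rRs; apply: mulr_ge0; [exact: ltW | exact: gap_ge0].
- by move=> j; rewrite /g !mulr_ge0 ?exprn_ge0 ?ler0n // ltW.
- move=> j r jK rRs; rewrite in_Grp //= => /andP[lo hi].
  have gap_le : ln mu - ln (s r) <= (K - j)%:R * ln 2.
    have mu_gt0 : 0 < mu := lt_le_trans (s_gt0 r) (le_mu r rRs).
    have up : ln mu <= ln (2 ^+ K * smin s).
      by rewrite ler_ln ?posrE ?mulr_gt0 ?exprn_gt0 // ltW.
    have down : ln (2 ^+ j * smin s) <= ln (s r).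
      by rewrite ler_ln ?posrE ?mulr_gt0 ?exprn_gt0.
    rewrite !lnM ?posrE ?exprn_gt0 // !lnXn // in up down.
    by rewrite natrB ?(ltnW jK) // mulrBl !mulr_natl; lra.
  rewrite /g [leRHS](_ : _ = 2 ^+ j.+1 * smin s * ((K - j)%:R * ln 2)); last by ring.
  exact: ler_pM (ltW (s_gt0 r)) (gap_ge0 r rRs) (ltW hi) gap_le.
apply: ler_wpM2l => //; rewrite -mulr_suml -mulrA; apply: ler_wpM2r.
  exact: mulr_ge0 (ltW smin_pos) ln2_ge0.
under eq_bigr => j _ do rewrite -natrX -natrM.
by rewrite -natr_sum -natrX ler_nat sum_exp2S_mul_le.
Qed.

Lemma wEnt_Gr_le (L : {set 'I_n}) : (0 < m)%N -> L \subset Gr -> #|L| = (2 * m)%N ->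
  (forall i j, i \in L -> j \in Gr :\: L -> s j <= s i) ->
  wEnt s Gr <= 25 * (wEnt s L + \sum_(i in L) s i).
Proof.
move=> m_gt0 LGr card_L L_top.
have [x xL] : exists x, x \in L by apply/card_gt0P; rewrite card_L muln_gt0.
have [i0 i0L min_i0] := arg_minP s xL; set mu := s i0.
have [[|k] [// _]] := admGr.1 i0 (subsetP LGr i0 i0L).
rewrite in_Grp //= => /andP[mu_ge mu_lt].
have tail_le r : r \in Gr :\: L -> s r <= mu by move=> rR; exact: L_top.
have mass := tail_mass_le (subsetDl Gr L) (fun r rR => le_lt_trans (tail_le r rR) mu_lt).
have went := tail_ln_gap_le (subsetDl Gr L) mu_lt tail_le.
have ln2_le1 : ln 2 <= 1 :> R by have := @ln_le_subr1 2; lra.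
apply: (wEnt_extend_le (mu := mu) s_gt0 LGr); rewrite ?card_L ?muln_gt0 //.
- exact: s_gt0.
- apply: le_trans mass _; rewrite [leRHS]mulrCA; apply: ler_wpM2l => //.
  by rewrite /mu !exprS; lra.
- apply: le_trans went _; rewrite [leRHS]mulrCA; apply: ler_wpM2l => //.
  have := ler_wpM2l (mulr_ge0 (exprn_ge0 k (ler0n R 2)) (ltW smin_pos)) ln2_le1.
  by rewrite /mu !exprS; lra.
Qed.

End AdmissibleGr.

Theorem lemma7 :
  exists c' : R, 0 < c' /\
  forall (m n : nat) (s : 'I_n -> R),
    (1 <= m)%N -> (2 * m < n)%N -> (forall i, 0 < s i) ->
    forall Gr : {set 'I_n},
      admissibleGr m s Gr ->
      (forall Gr' : {set 'I_n}, admissibleGr m s Gr' -> Ent Gr' s <= Ent Gr s) ->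
    forall L : {set 'I_n},
      L \subset Gr -> #|L| = (2 * m)%N ->
      (forall i j, i \in L -> j \in Gr :\: L -> s j <= s i) ->
      lhs7 m s L >=
        c' * (\sum_(i in Gleft m s) s i) * Ent Gr s - ln 2 * \sum_(i in L) s i.
Proof.
have ln2_gt0 : 0 < ln (2 : R) by apply: ln_gt0; lra.
have ln2_le1 : ln 2 <= 1 :> R by have := @ln_le_subr1 2; lra.
exists (ln 2 / 50); split=> [|m n s m_gt0 _ s_gt0 Gr admGr _ L LGr card_L L_top]; first lra.
have [i0 _] : exists i0, i0 \in L by apply/card_gt0P; rewrite card_L muln_gt0.
have smin_pos := smin_gt0 i0 s_gt0.
have Ent_Gr_ge0 : 0 <= Ent Gr s by apply: Ent_ge0 => i _; exact: ltW.
have Gleft_le : (\sum_(i in Gleft m s) s i) * Ent Gr s <= wEnt s Gr.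
  rewrite -mulr_sum_Ent // ler_wpM2r // ler_sum_subset ?Gleft_subset // => i _.
  exact: ltW.
have Gr_le := wEnt_Gr_le s_gt0 smin_pos admGr m_gt0 LGr card_L L_top.
have lhs_ge := lhs7_ge m_gt0 s_gt0 card_L.
have := ler_wpM2l (ltW ln2_gt0) (le_trans Gleft_le Gr_le).
have := ler_wpM2r (wEnt_ge0 s_gt0 L) ln2_le1.
have := ler_wpM2l (ltW ln2_gt0) (sumr_ge0 _ (fun i _ => ltW (s_gt0 i)) : 0 <= \sum_(i in L) s i).
lra.
Qed.
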